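(* Let $c,k>0$ and let $U$ be a function assignment for $\mathbb{N}^k$. Suppose that for every $p>0$ there exist a finite $A\subseteq\mathbb{N}^k$ and $E\subseteq\mathbb{N}$ with $|E|=p$ and $E^k\subseteq A$ such that $U(A)$ has at most $c$ regressive values on $E^k$. Then for every $p>0$ there exist a finite $A\subseteq\mathbb{N}^k$ and $E\subseteq\mathbb{N}$ with $|E|=p$ and $E^k\subseteq A$ such that $U(A)$ has at most $\mathrm{ot}(k)$ regressive values on $E^k$ (in particular at most $k^k$).
   Context: $\mathbb{N}=\{0,1,\dots\}$; for $x\in\mathbb{N}^k$, $\min(x)$ and $|x|$ are its least and greatest coordinates. A function assignment for $\mathbb{N}^k$ assigns to each finite $A\subseteq\mathbb{N}^k$ a function $U(A):A\to A$. $y$ is a regressive value of $F$ on $B$ iff $y=F(x)$ for some $x\in B$ with $|y|<\min(x)$. $x,y\in\mathbb{N}^k$ have the same order type iff $x_i<x_j\Leftrightarrow y_i<y_j$ for all $i,j$; $\mathrm{ot}(k)$ is the number of order types of elements of $\mathbb{N}^k$ (and $\mathrm{ot}(k)\le k^k$). *)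

From mathcomp Require Import all_boot all_order.
From mathcomp Require Import finmap.
From mathcomp Require Import boolp.
Set Implicit Arguments. Unset Strict Implicit. Unset Printing Implicit Defensive.
Local Open Scope fset_scope.

Notation pt k := (k.-tuple nat).

(* |x| : greatest coordinate; min(x) : least coordinate (k > 0 in use). *)
Definition tmax k (x : pt k) : nat := \max_(i < k) tnth x i.
Definition tmin k (x : pt k) : nat := \big[minn/head 0 x]_(i <- x) i.

(* A function assignment for N^k: to each finite A ⊆ N^k a map U(A) : A -> A.
   Encoded as U : {fset pt k} -> pt k -> pt k with U A mapping A into A
   (values outside A are irrelevant). *)
Definition function_assignment k (U : {fset pt k} -> pt k -> pt k) : Prop :=
  forall (A : {fset pt k}) (x : pt k), x \in A -> U A x \in A.

Definition in_cube k (E : {fset nat}) (x : pt k) : bool := all (fun e => e \in E) x.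

Definition cube_sub k (E : {fset nat}) (A : {fset pt k}) : Prop :=
  forall x : pt k, in_cube E x -> x \in A.

(* The set of regressive values of F on E^k (for E^k ⊆ A, where F = U(A)):
   y = F x with x ∈ E^k and |y| < min(x). *)
Definition regressive_values k (F : pt k -> pt k) (A : {fset pt k})
    (E : {fset nat}) : {fset pt k} :=
  [fset F x | x in A & in_cube E x && (tmax (F x) < tmin x)].

(* Order types: x, y have the same order type iff x_i < x_j <-> y_i < y_j.
   An order type is thus determined by the relation (i,j) |-> (x_i < x_j);
   ot(k) is the number of such relations realized by some x ∈ N^k. *)
Definition order_pattern k (x : pt k) : {ffun 'I_k * 'I_k -> bool} :=
  [ffun ij => tnth x ij.1 < tnth x ij.2].

Definition ot (k : nat) : nat :=
  #|[set r : {ffun 'I_k * 'I_k -> bool} | `[< exists x : pt k, order_pattern x = r >] ]|.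

(* Colour each k-subset T of E by the vector which records, for every order
   pattern r, which regressive value (if any) U(A) takes at the point of E^k
   whose coordinates are the elements of T arranged according to r. Since the
   number of regressive values is at most c, there are finitely many colours,
   and Ramsey's theorem yields a large homogeneous subset H of E. Let E' consist
   of all but the k largest elements of H: every x in E'^k can be padded with
   large elements of H to a k-subset of H that realizes x through its pattern,
   so the regressive value at x depends only on the order pattern of x. Hence
   U(A) has at most ot(k) regressive values on E'^k. *)
From mathcomp Require Import all_boot all_order.
From mathcomp Require Import finmap boolp.
Set Implicit Arguments. Unset Strict Implicit. Unset Printing Implicit Defensive.

Section FiniteRamsey.

Variable C : finType.

Lemma pigeonhole (c0 : C) (s : seq C) p :
  #|C| * p <= size s -> exists col, p <= count (pred1 col) s.
Proof.
have size_sum : \sum_(col : C) count (pred1 col) s = size s.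
  elim: s => [|a s IHs] /=; first by rewrite big1.
  rewrite big_split /= IHs (bigD1 a) //= eqxx big1 // => col /negPf.
  by rewrite eq_sym => ->.
move=> le_s; case: p le_s => [|p] le_s; first by exists c0.
have [col ltcol|all_small] := pickP (fun col => p < count (pred1 col) s).
  by exists col.
have C_gt0 : 0 < #|C| by apply/card_gt0P; exists c0.
suff : size s <= #|C| * p by move/(leq_trans le_s); rewrite leq_pmul2l // ltnn.
rewrite -size_sum -sum_nat_const; apply: leq_sum => col _.
by rewrite leqNgt all_small.
Qed.

Definition homogeneous (f : seq nat -> C) k (h : seq nat) :=
  exists col, forall t, subseq t h -> size t = k -> f t = col.

Fixpoint end_homogeneous k (f : seq nat -> C) (ch : seq (nat * C)) : Prop :=
  if ch is a :: ch' then
    (forall t, subseq t (map fst ch') -> size t = k -> f (a.1 :: t) = a.2)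
    /\ end_homogeneous k f ch'
  else True.

Lemma end_homogeneous_subseq k f ch1 ch2 :
  subseq ch1 ch2 -> end_homogeneous k f ch2 -> end_homogeneous k f ch1.
Proof.
elim: ch2 ch1 => [|b ch2 IH] [|a ch1] //=.
case: eqP => [<-|_] sub12 [headb endb]; last exact: IH sub12 endb.
split; last exact: IH.
by move=> t subt; apply: headb; apply: subseq_trans subt (map_subseq _ _).
Qed.

Lemma end_homogeneous_const k f col ch :
  end_homogeneous k f ch -> all (fun a => a.2 == col) ch ->
  forall t, subseq t (map fst ch) -> size t = k.+1 -> f t = col.
Proof.
elim: ch => [|a ch IH] /= endch colch [|y t] //=.
case: endch colch => heada endch /andP[/eqP cola colch].
case: eqP => [->|_] subt sizet; first by rewrite -cola; apply: heada; case: sizet.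
exact: IH.
Qed.

Definition ramsey_property k := forall p, exists N, forall s : seq nat,
  N <= size s -> forall f : seq nat -> C,
  exists h, [/\ subseq h s, size h = p & homogeneous f k h].

Lemma end_homogeneous_chain k : ramsey_property k -> forall m, exists L,
  forall s : seq nat, L <= size s -> forall f : seq nat -> C,
  exists ch, [/\ subseq (map fst ch) s, size ch = m & end_homogeneous k f ch].
Proof.
move=> ramsey_k; elim=> [|m [L chainL]].
  by exists 0 => s _ f; exists [::]; rewrite sub0seq.
have [N homN] := ramsey_k L; exists N.+1 => -[//|a s] /= le_s f.
have [h [subh sizeh [col colh]]] := homN s le_s (fun t => f (a :: t)).
have [ch [subch sizech endch]] := chainL h (eq_leq (esym sizeh)) f.
exists ((a, col) :: ch); split => /=.
- by rewrite eqxx (subseq_trans subch subh).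
- by rewrite sizech.
- by split=> // t subt; apply: colh; apply: subseq_trans subt subch.
Qed.

Theorem ramsey k : ramsey_property k.
Proof.
elim: k => [|k IHk] p.
  exists p => s le_s f; exists (take p s); split; first exact: take_subseq.
    by rewrite size_takel.
  by exists (f [::]) => -[].
have [L chainL] := end_homogeneous_chain IHk (#|C| * p).
exists L => s le_s f.
have [ch [subch sizech endch]] := chainL s le_s f.
have [col] : exists col, p <= count (pred1 col) (map snd ch).
  by apply: (pigeonhole (f [::])); rewrite size_map sizech.
rewrite count_map => le_p.
pose ch' := take p [seq a <- ch | a.2 == col].
have sub' : subseq ch' ch := subseq_trans (take_subseq _ _) (filter_subseq _ _).
exists (map fst ch'); split.
- exact: subseq_trans (map_subseq _ sub') subch.
- by rewrite size_map size_takel // size_filter.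
- exists col; apply: end_homogeneous_const (end_homogeneous_subseq sub' endch) _.
  by apply/allP => a /(mem_subseq (take_subseq _ _)); rewrite mem_filter => /andP[].
Qed.

End FiniteRamsey.

Lemma count_ltn_lt_size (S : seq nat) v : v \in S -> count (fun w => w < v) S < size S.
Proof.
move=> vS; rewrite -(count_predC (fun w => w < v) S) -{1}[count _ _]addn0 ltn_add2l.
by rewrite -has_count; apply/hasP; exists v; rewrite //= ltnn.
Qed.

Lemma nth_count_ltn (S : seq nat) v :
  sorted ltn S -> v \in S -> nth 0 S (count (fun w => w < v) S) = v.
Proof.
elim: S => [//|a S IHS] sortS; rewrite inE /=.
have a_lt : all (fun w => a < w) S := order_path_min ltn_trans sortS.
case: eqVneq => [-> _|ne_va /= vS].
  suff -> : count (fun w => w < a) S = 0 by rewrite ltnn.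
  apply/eqP; rewrite -leqn0 leqNgt -has_count; apply/hasP => -[w /(allP a_lt) aw].
  by rewrite ltnNge ltnW.
by rewrite (allP a_lt v vS) /= IHS // (path_sorted sortS).
Qed.

Lemma inord_inj n m m' : m <= n -> m' <= n -> inord m = inord m' :> 'I_n.+1 -> m = m'.
Proof. by move=> le_m le_m' /(congr1 val); rewrite /= !inordK. Qed.

Section OrderPattern.

Variable k : nat.
Local Notation pattern := {ffun 'I_k * 'I_k -> bool}.

(* For r the pattern of x, [new_value r j] says that j is the first index at
   which the value x_j occurs, so [pattern_rank r i] counts the distinct
   coordinate values of x below x_i: it is the position of x_i in the sorted
   set of coordinates of x. *)
Definition new_value (r : pattern) (j : 'I_k) : bool :=
  [forall l : 'I_k, (l < j) ==> r (l, j) || r (j, l)].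

Definition pattern_rank (r : pattern) (i : 'I_k) : nat :=
  count (fun j => new_value r j && r (j, i)) (enum 'I_k).

Definition pattern_point (T : seq nat) (r : pattern) : k.-tuple nat :=
  [tuple nth 0 T (pattern_rank r i) | i < k].

Definition coordinate_values (x : k.-tuple nat) : seq nat :=
  map (tnth x) [seq j <- enum 'I_k | new_value (order_pattern x) j].

Lemma new_value_order_pattern (x : k.-tuple nat) j :
  new_value (order_pattern x) j = [forall l : 'I_k, (l < j) ==> (tnth x l != tnth x j)].
Proof. by apply: eq_forallb => l; rewrite !ffunE neq_ltn. Qed.

Lemma uniq_coordinate_values x : uniq (coordinate_values x).
Proof.
rewrite map_inj_in_uniq; first by apply: filter_uniq; apply: enum_uniq.
move=> j1 j2.
rewrite !mem_filter !new_value_order_pattern.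
move=> /andP[/forallP new1 _] /andP[/forallP new2 _] x12.
apply: val_inj; case: (ltngtP (val j1) (val j2)) => // lt.
- by have := new2 j1; rewrite lt x12 eqxx.
- by have := new1 j2; rewrite lt x12 eqxx.
Qed.

Lemma mem_coordinate_values x : coordinate_values x =i x.
Proof.
move=> v; apply/mapP/idP => [[j _ ->]|xv]; first exact: mem_tnth.
have lt_idx : index v x < k by rewrite -[k in _ < k](size_tuple x) index_mem.
have xj : tnth x (Ordinal lt_idx) = v by rewrite (tnth_nth 0) nth_index.
exists (Ordinal lt_idx) => //; rewrite mem_filter mem_enum andbT new_value_order_pattern.
apply/forallP => l; apply/implyP => lt_l; rewrite xj (tnth_nth 0).
exact/negbT/(before_find 0 lt_l).
Qed.

Lemma pattern_rankE x i :
  pattern_rank (order_pattern x) i = count (fun w => w < tnth x i) (coordinate_values x).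
Proof. by rewrite count_map count_filter; apply: eq_count => j; rewrite /= ffunE andbC. Qed.

Lemma pattern_point_cat (x : k.-tuple nat) (S t : seq nat) :
  sorted ltn S -> S =i x -> pattern_point (S ++ t) (order_pattern x) = x.
Proof.
move=> sortS Sx.
have permS : perm_eq S (coordinate_values x).
  apply: uniq_perm; rewrite ?uniq_coordinate_values ?(sorted_uniq ltn_trans ltnn) //.
  by move=> v; rewrite Sx mem_coordinate_values.
apply: eq_from_tnth => i; rewrite tnth_mktuple pattern_rankE -(permP permS).
have xiS : tnth x i \in S by rewrite Sx mem_tnth.
by rewrite nth_cat count_ltn_lt_size // nth_count_ltn.
Qed.

End OrderPattern.

Local Open Scope fset_scope.

Lemma homogeneous_factors_through_pattern k (T : finType) (g : k.-tuple nat -> T)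
    (h : seq nat) p
    (col : {ffun {ffun 'I_k * 'I_k -> bool} -> T}) :
  sorted ltn h -> size h = (p + k)%N ->
  (forall t, subseq t h -> size t = k -> [ffun r => g (pattern_point t r)] = col) ->
  forall x, in_cube [fset v in take p h] x -> g x = col (order_pattern x).
Proof.
move=> sort_h size_h col_h x /allP cube_x.
have sort_low : sorted ltn (take p h) := subseq_sorted ltn_trans (take_subseq _ _) sort_h.
pose S := [seq v <- take p h | v \in x].
have Sx : S =i x.
  move=> v; rewrite mem_filter; apply/andP/idP => [[]//|xv]; split=> //.
  by have := cube_x v xv; rewrite inE.
have size_S : size S <= k.
  rewrite -[k](size_tuple x); apply: uniq_leq_size => [|v]; last by rewrite Sx.
  exact/filter_uniq/(sorted_uniq ltn_trans ltnn).
pose t := S ++ take (k - size S)%N (drop p h).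
have sub_t : subseq t h.
  rewrite -[h in subseq _ h](cat_take_drop p h).
  exact: cat_subseq (filter_subseq _ _) (take_subseq _ _).
have size_t : size t = k.
  by rewrite size_cat size_takel ?subnKC // size_drop size_h addKn leq_subr.
rewrite -(col_h t sub_t size_t) ffunE pattern_point_cat //.
exact: (sorted_filter ltn_trans _ sort_low).
Qed.

Definition regressive_at k (F : k.-tuple nat -> k.-tuple nat) (E : {fset nat})
    (x : k.-tuple nat) : bool :=
  in_cube E x && (tmax (F x) < tmin x).

Lemma in_cube_sub k (E E' : {fset nat}) (x : k.-tuple nat) :
  {subset E <= E'} -> in_cube E x -> in_cube E' x.
Proof. by move=> EE' /allP cube_x; apply/allP => v /cube_x /EE'. Qed.

Section RegressiveValues.

Variables (k : nat) (F : k.-tuple nat -> k.-tuple nat).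
Variables (A : {fset k.-tuple nat}) (E : {fset nat}).
Local Notation regressive := (regressive_at F E).

Lemma card_regressive_values_le_ot :
  {in A &, forall x x', regressive x -> regressive x' ->
     order_pattern x = order_pattern x' -> F x = F x'} ->
  #|` regressive_values F A E| <= ot k.
Proof.
move=> F_pattern.
pose P := [set r | `[< exists x : k.-tuple nat, order_pattern x = r >] ].
pose D := [seq x <- A | regressive x].
pose G r := F (nth [tuple 0 | _ < k] [seq x <- D | order_pattern x == r] 0).
suff sub_G : regressive_values F A E `<=` [fset G r | r in P].
  rewrite (leq_trans (fsubset_leq_card sub_G)) //.
  by rewrite (leq_trans (leq_imfset_card _ _ _)) //= -cardE.
apply/fsubsetP => _ /imfsetP [x /= /andP[xA reg_x] ->].
apply/imfsetP; exists (order_pattern x); first by rewrite inE; apply/asboolP; exists x.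
pose l := [seq y <- D | order_pattern y == order_pattern x].
have xD : x \in l by rewrite !mem_filter eqxx /regressive_at reg_x.
have : nth [tuple 0 | _ < k] l 0 \in l.
  by rewrite mem_nth // lt0n size_eq0; apply: contraTneq xD => ->.
rewrite /G -/l; set x' := nth _ l 0.
rewrite !mem_filter => /and3P[/eqP pat_x' reg_x' x'A].
exact: F_pattern (esym pat_x').
Qed.

Definition regressive_code (x : k.-tuple nat) : nat :=
  if regressive x then (index (F x) (regressive_values F A E)).+1 else 0.

Lemma regressive_code_le x : regressive_code x <= #|` regressive_values F A E|.+1.
Proof. by rewrite /regressive_code; case: ifP => // _; rewrite ltnS index_size. Qed.

Lemma regressive_code_inj :
  {in A &, forall x x', regressive x -> regressive x' ->
     regressive_code x = regressive_code x' -> F x = F x'}.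
Proof.
move=> x x' xA x'A reg_x reg_x'; rewrite /regressive_code reg_x reg_x' => -[idx].
have mem_x : F x \in regressive_values F A E by apply/imfsetP; exists x; rewrite //= inE xA.
have mem_x' : F x' \in regressive_values F A E by apply/imfsetP; exists x'; rewrite //= inE x'A.
by rewrite -(nth_index (F x) mem_x) idx nth_index.
Qed.

End RegressiveValues.

Theorem lemma3p12 (c k : nat) (U : {fset (k.-tuple nat)} -> k.-tuple nat -> k.-tuple nat) :
  0 < c -> 0 < k -> function_assignment U ->
  (forall p : nat, 0 < p ->
     exists (A : {fset (k.-tuple nat)}) (E : {fset nat}),
       #|` E| = p /\ cube_sub E A /\ #|` regressive_values (U A) A E| <= c) ->
  forall p : nat, 0 < p ->
     exists (A : {fset (k.-tuple nat)}) (E : {fset nat}),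
       #|` E| = p /\ cube_sub E A /\ #|` regressive_values (U A) A E| <= ot k.
Proof.
move=> _ _ _ few_regressive p _.
have [N ramseyN] := ramsey {ffun {ffun 'I_k * 'I_k -> bool} -> 'I_c.+2} k (p + k)%N.
have [A [E [size_E [cube_A reg_c]]]] := few_regressive N.+1 isT.
pose code x : 'I_c.+2 := inord (regressive_code (U A) A E x).
have code_le x : regressive_code (U A) A E x <= c.+1.
  exact: leq_trans (regressive_code_le _ _ _ _) _.
pose s := sort leq E.
have sort_s : sorted ltn s.
  by rewrite ltn_sorted_uniq_leq sort_uniq fset_uniq (sort_sorted leq_total).
pose colour t := [ffun r => code (pattern_point t r)].
have [|h [sub_h size_h [col col_h]]] := ramseyN s _ colour.
  by rewrite size_sort size_E.
pose E' := [fset v in take p h].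
have E'E : {subset E' <= E}.
  move=> v; rewrite inE => /(mem_subseq (take_subseq _ _)) /(mem_subseq sub_h).
  by rewrite mem_sort.
have sort_h : sorted ltn h := subseq_sorted ltn_trans sub_h sort_s.
have code_pattern := homogeneous_factors_through_pattern sort_h size_h col_h.
exists A, E'; split; [|split].
- rewrite card_fseq undup_id ?size_takel ?size_h ?leq_addr //.
  exact: subseq_uniq (take_subseq _ _) (sorted_uniq ltn_trans ltnn sort_h).
- by move=> x /(in_cube_sub E'E); apply: cube_A.
apply: card_regressive_values_le_ot => x x' xA x'A.
move=> /andP[cube_x lt_x] /andP[cube_x' lt_x'] pat.
apply: (@regressive_code_inj _ _ _ E _ _ xA x'A).
- by rewrite /regressive_at (in_cube_sub E'E cube_x).
- by rewrite /regressive_at (in_cube_sub E'E cube_x').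
apply: (inord_inj (code_le x) (code_le x')).
by rewrite -/(code x) -/(code x') !code_pattern // pat.
Qed.
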